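(* Let $d\ge 4$. If every configuration in $Q^3_d$ of type $\varphi_1$, $\varphi_2$, $\varphi_3$ or $\varphi_4$ is covered, then $Q^3_d$ is loose Hamilton connected.
   Context: $Q^3_d$ is the $3$-uniform hypergraph on $V_d=\{0,1,2\}^d$ whose edges are the triples of pairwise distinct sequences agreeing in $d-1$ coordinates. A loose path from $v_0$ to $v_{2\ell}$ consists of distinct vertices $v_0,\dots,v_{2\ell}$ and distinct edges $e_i=\{v_{2i-2},v_{2i-1},v_{2i}\}$, $i=1,\dots,\ell$. A hypergraph is loose Hamilton connected if for any two distinct vertices $a,b$ there is a loose path from $a$ to $b$ containing all vertices. A configuration is an ordered $4$-tuple $(a,b,x,y)$ of pairwise distinct vertices of $V_d$; it is covered if there is a loose path from $a$ to $b$ whose vertex set is exactly $V_d\setminus\{x,y\}$. For $v\in V_d$ write $v_i$ for its $i$-th coordinate and $v_{[k]}=(v_1,\dots,v_k)$. A symmetry is a bijection of $V_d$ obtained by permuting the coordinates and, independently in each coordinate, permuting the values $\{0,1,2\}$. A configuration $c=(a,b,x,y)$ is of a given type if, after applying some symmetry to all four vertices and possibly interchanging $x$ and $y$, the resulting configuration (still denoted $(a,b,x,y)$) satisfies: $\varphi_1$: $a_d=x_d=0$, $b_d=1$, $y_d=2$, $a_{[d-1]}\notin\{b_{[d-1]},x_{[d-1]},y_{[d-1]}\}$, and there is $i\in[d-1]$ with $b_i\in\{a_i,x_i,y_i\}$; $\varphi_2$: $a_d=b_d=0$, $x_d=1$, $y_d=2$, and either $a_{[d-1]}\notin\{b_{[d-1]},x_{[d-1]},y_{[d-1]}\}$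 or $b_{[d-1]}\notin\{a_{[d-1]},x_{[d-1]},y_{[d-1]}\}$, and there are two distinct $i,i'\in[d-1]$, $u\in\{a,b\}$, $w\in\{x,y\}$ with $u_i=w_i$ and $u_{i'}=w_{i'}$; $\varphi_3$: $a_d=x_d=0$, $b_d=y_d=1$, and there is $i\in[d-1]$ with $a_i=y_i$ or $b_i=x_i$; $\varphi_4$: $a_d=0$, $b_d=x_d=1$, $y_d=2$, $b_{[d-1]}\notin\{a_{[d-1]},x_{[d-1]},y_{[d-1]}\}$, and there is $i\in[d-1]$ with $a_i\in\{b_i,x_i,y_i\}$. *)

From mathcomp Require Import all_boot.
From mathcomp Require Import fingroup perm.
Set Implicit Arguments. Unset Strict Implicit. Unset Printing Implicit Defensive.

(* Vertices of Q^3_d: sequences in {0,1,2}^d, coordinates indexed by 'I_d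
   (paper's coordinate i corresponds to index i-1). *)
Definition vtx (d : nat) := {ffun 'I_d -> 'I_3}.

Definition is_edge d (u v w : vtx d) : bool :=
  [&& u != v, v != w, u != w &
      [exists i : 'I_d, forall j : 'I_d, (j != i) ==> (u j == v j) && (v j == w j)]].

(* loose path from a to b with vertex sequence p = [v_0; ...; v_{2l}]:
   distinct vertices, and {v_{2i}, v_{2i+1}, v_{2i+2}} edges.
   (Distinctness of the edges follows from distinctness of the vertices.) *)
Definition loose_path d (a b : vtx d) (p : seq (vtx d)) : bool :=
  [&& uniq p, odd (size p), nth a p 0 == a, last a p == b &
      all (fun i => is_edge (nth a p i.*2) (nth a p i.*2.+1) (nth a p i.*2.+2))
          (iota 0 (size p)./2)].

Definition loose_hamilton_connected d : Prop :=
  forall a b : vtx d, a != b ->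
    exists p, loose_path a b p /\ forall v : vtx d, v \in p.

Definition covered d (a b x y : vtx d) : Prop :=
  exists p, loose_path a b p /\ forall v : vtx d, (v \in p) = (v \notin [:: x; y]).

Definition pairwise_distinct4 d (a b x y : vtx d) : Prop :=
  [&& a != b, a != x, a != y, b != x, b != y & x != y].

Definition sym d (sigma : {perm 'I_d}) (pi : 'I_d -> {perm 'I_3}) (v : vtx d) : vtx d :=
  [ffun j => pi j (v (sigma j))].

Definition word d (v : vtx d) : seq nat := [seq nat_of_ord (v i) | i <- enum 'I_d].
(* c v k = v_{k+1} in the paper's 1-based notation *)
Definition c d (v : vtx d) (k : nat) : nat := nth 0 (word v) k.
Definition lastc d (v : vtx d) : nat := c v d.-1.
Definition pre d (v : vtx d) : seq nat := take d.-1 (word v).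

Definition phi1 d (a b x y : vtx d) : Prop :=
  [/\ [/\ lastc a = 0, lastc x = 0, lastc b = 1 & lastc y = 2],
      pre a \notin [:: pre b; pre x; pre y] &
      exists i, i < d.-1 /\ c b i \in [:: c a i; c x i; c y i]].

Definition phi2 d (a b x y : vtx d) : Prop :=
  [/\ [/\ lastc a = 0, lastc b = 0, lastc x = 1 & lastc y = 2],
      (pre a \notin [:: pre b; pre x; pre y]) \/ (pre b \notin [:: pre a; pre x; pre y]) &
      exists i i' (u w : vtx d), [/\ [/\ i < d.-1, i' < d.-1 & i <> i'],
         u \in [:: a; b], w \in [:: x; y] & c u i = c w i /\ c u i' = c w i']].

Definition phi3 d (a b x y : vtx d) : Prop :=
  [/\ lastc a = 0, lastc x = 0, lastc b = 1, lastc y = 1 &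
      exists i, i < d.-1 /\ (c a i = c y i \/ c b i = c x i)].

Definition phi4 d (a b x y : vtx d) : Prop :=
  [/\ [/\ lastc a = 0, lastc b = 1, lastc x = 1 & lastc y = 2],
      pre b \notin [:: pre a; pre x; pre y] &
      exists i, i < d.-1 /\ c a i \in [:: c b i; c x i; c y i]].

Definition of_type d (phi : vtx d -> vtx d -> vtx d -> vtx d -> Prop)
    (a b x y : vtx d) : Prop :=
  exists (sigma : {perm 'I_d}) (pi : 'I_d -> {perm 'I_3}),
    let f := sym sigma pi in phi (f a) (f b) (f x) (f y) \/ phi (f a) (f b) (f y) (f x).

From mathcomp Require Import all_boot.
From mathcomp Require Import fingroup perm.
Set Implicit Arguments. Unset Strict Implicit. Unset Printing Implicit Defensive.

(* Given a <> b, choose a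
   coordinate k with a_k <> b_k and a second coordinate j.  On the line through
   b in direction j pick z with z_j different from a_j and b_j, and let w be the
   third point of that line.  Moving coordinate j last and renaming its values,
   (a, z, w, b) becomes a phi1 configuration (up to swapping w and b), the
   coordinate k witnessing both the prefix condition and z_k = b_k.  A loose
   path from a to z through every vertex except w and b then ends with the edge
   {z, w, b}. *)

Lemma c_ord d (v : vtx d) (i : 'I_d) : c v i = v i.
Proof.
rewrite /c /word (nth_map i) ?size_enum_ord //.
by congr (nat_of_ord (v _)); apply: val_inj; rewrite /= nth_enum_ord.
Qed.

Lemma lastc_ord d (v : vtx d) (m : 'I_d) : val m = d.-1 -> lastc v = v m.
Proof. by move=> m_last; rewrite /lastc -m_last c_ord. Qed.

Lemma pre_neq d (v w : vtx d) (i : 'I_d) : i < d.-1 -> v i != w i -> pre v != pre w.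
Proof.
move=> lt_i_d neq_vw; apply: contra neq_vw => /eqP/(congr1 (nth 0 ^~ i)).
by rewrite /pre !nth_take // -/(c v i) -/(c w i) !c_ord => /val_inj ->.
Qed.

Lemma ffun_neq_exists (aT : finType) (rT : eqType) (f g : {ffun aT -> rT}) :
  f != g -> exists x, f x != g x.
Proof.
move=> neq_fg; apply/existsP; apply: contraNT neq_fg => /existsPn same.
by apply/eqP/ffunP => x; apply/eqP/negPn/same.
Qed.

Lemma ord_neq_exists n (k : 'I_n) : 1 < n -> exists j : 'I_n, k != j.
Proof.
move=> n_gt1; have n_gt0 := ltnW n_gt1.
by case: (eqVneq k (Ordinal n_gt0)) => [->|]; [exists (Ordinal n_gt1) | exists (Ordinal n_gt0)].
Qed.

Definition line d (b : vtx d) (j : 'I_d) (t : 'I_3) : vtx d :=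
  [ffun i => if i == j then t else b i].

Lemma line_id d (b : vtx d) j t : line b j t j = t.
Proof. by rewrite ffunE eqxx. Qed.

Lemma line_ne d (b : vtx d) j t k : k != j -> line b j t k = b k.
Proof. by move=> /negbTE neq_kj; rewrite ffunE neq_kj. Qed.

Lemma line_self d (b : vtx d) j : line b j (b j) = b.
Proof. by apply/ffunP => i; rewrite ffunE; case: eqP => // ->. Qed.

Lemma line_eq_self d (b : vtx d) j t : (line b j t == b) = (t == b j).
Proof.
apply/eqP/eqP => [eq_b|->]; last exact: line_self.
by rewrite -[t](line_id b j) eq_b.
Qed.

Lemma line_inj d (b : vtx d) j : injective (line b j).
Proof. by move=> t1 t2 /(congr1 (fun v : vtx d => v j)); rewrite !line_id. Qed.

Lemma is_edge_line d (b : vtx d) j t1 t2 t3 :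
  t1 != t2 -> t2 != t3 -> t1 != t3 ->
  is_edge (line b j t1) (line b j t2) (line b j t3).
Proof.
move=> neq12 neq23 neq13; rewrite /is_edge !(inj_eq (@line_inj _ b j)) neq12 neq23 neq13.
apply/existsP; exists j; apply/forallP => i; apply/implyP => /negbTE neq_ij.
by rewrite !ffunE neq_ij !eqxx.
Qed.

Lemma loose_path_cat_edge d (a z u w : vtx d) p :
  loose_path a z p -> is_edge z u w -> u \notin p -> w \notin p -> u != w ->
  loose_path a w (p ++ [:: u; w]).
Proof.
case/and5P=> uniq_p odd_p head_p /eqP last_p edges_p e_zuw u_p w_p neq_uw.
have [n size_p] : exists n, size p = n.*2.+1.
  by exists (size p)./2; rewrite -[LHS]odd_double_half odd_p.
have half_p : (size p)./2 = n by rewrite size_p -[n.*2.+1]/(true + n.*2) half_bit_double.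
have p_gt0 : 0 < size p by rewrite size_p.
apply/and5P; split.
- by rewrite cat_uniq uniq_p /= !inE negb_or neq_uw orbF u_p w_p.
- by rewrite size_cat addn2 /= negbK.
- by rewrite nth_cat p_gt0.
- by rewrite last_cat.
have -> : (size (p ++ [:: u; w]))./2 = n + 1.
  by rewrite size_cat size_p addn2 addn1 -doubleS -[_.+1.*2.+1]/(true + n.+1.*2) half_bit_double.
rewrite iotaD all_cat /= andbT add0n; apply/andP; split.
  apply/allP => i i_lt; move/allP/(_ i): edges_p; rewrite half_p => /(_ i_lt).
  rewrite mem_iota add0n in i_lt.
  have lt_i2 : i.*2.+2 < size p by rewrite size_p ltnS -doubleS leq_double.
  by rewrite !nth_cat lt_i2 (ltnW lt_i2) (ltnW (ltnW lt_i2)).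
have z_last : nth a p n.*2 = z by rewrite -last_p (last_nth a) size_p.
by rewrite !nth_cat size_p ltnSn ltnn ltnNge leqnSn /= subnn subSn // subnn /= z_last.
Qed.

Lemma I3_avoid2 (u v : 'I_3) : exists2 w : 'I_3, w != u & w != v.
Proof.
move: u v; do 2!case=> [[|[|[|//]]] ?]; first
  [by exists (@Ordinal 3 0 isT) | by exists (@Ordinal 3 1 isT) | by exists (@Ordinal 3 2 isT)].
Qed.

Lemma I3_mem3 (u v w t : 'I_3) : u != v -> v != w -> u != w -> t \in [:: u; v; w].
Proof. by move: u v w t; do 4!case=> [[|[|[|//]]] ?]. Qed.

Lemma perm_I3_012 (u v w : 'I_3) : u != v -> v != w -> u != w ->
  exists P : {perm 'I_3}, [/\ P u = 0 :> nat, P v = 1 :> nat & P w = 2 :> nat].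
Proof.
move=> neq_uv neq_vw neq_uw; set s := [:: u; v; w].
pose g t : 'I_3 := inord (index t s).
have gK : cancel g (nth u s).
  move=> t; have t_s : t \in s by apply: I3_mem3.
  by rewrite /g inordK ?nth_index // -[3]/(size s) index_mem.
exists (perm (can_inj gK)); rewrite !permE /g /= eqxx (negbTE neq_uv) (negbTE neq_uw).
by rewrite eq_sym (negbTE neq_vw) !eqxx !inordK.
Qed.

Lemma of_type_swap d (phi : vtx d -> vtx d -> vtx d -> vtx d -> Prop) (a b x y : vtx d) :
  of_type phi a b x y -> of_type phi a b y x.
Proof. by case=> sigma [pi config]; exists sigma, pi; case: config; [right | left]. Qed.

Lemma of_type_phi1_line d (a b : vtx d) (j k : 'I_d) (tz ty : 'I_3) :
  k != j -> a k != b k -> a j != tz -> tz != ty -> a j != ty ->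
  of_type (@phi1 d) a (line b j tz) (line b j (a j)) (line b j ty).
Proof.
move=> neq_kj neq_abk neq_az neq_zy neq_ay.
have [P [Pa Pz Py]] := perm_I3_012 neq_az neq_zy neq_ay.
have d_gt0 : 0 < d := leq_ltn_trans (leq0n j) (ltn_ord j).
pose m : 'I_d := Ordinal (etrans (ltn_predL d) d_gt0).
pose sigma := tperm j m; pose pi i := if i == m then P else 1%g.
exists sigma, pi; left; set f := sym sigma pi.
have f_last v : lastc (f v) = P (v j).
  by rewrite (@lastc_ord _ _ m) // ffunE /pi eqxx tpermR.
have sk_ne_m : sigma k != m.
  apply: contra neq_kj => /eqP sk_m; apply/eqP/(@perm_inj _ sigma).
  by rewrite sk_m tpermL.
have f_k v : f v (sigma k) = v k by rewrite ffunE /pi (negbTE sk_ne_m) perm1 tpermK.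
have sk_lt : sigma k < d.-1.
  rewrite ltn_neqAle -ltnS prednK // ltn_ord andbT.
  by apply: contra sk_ne_m => /eqP sk_m; apply/eqP/val_inj.
split.
- by split; rewrite f_last ?line_id.
- rewrite !inE !negb_or; apply/and3P.
  by split; apply: (pre_neq sk_lt); rewrite !f_k line_ne.
- exists (nat_of_ord (sigma k)); split => //.
  by rewrite !c_ord !f_k !line_ne // !inE eqxx !orbT.
Qed.

Lemma of_type_phi1_line_mem d (a b : vtx d) (j k : 'I_d) (tz t1 t2 : 'I_3) :
  k != j -> a k != b k -> tz != t1 -> t1 != t2 -> tz != t2 -> a j \in [:: t1; t2] ->
  of_type (@phi1 d) a (line b j tz) (line b j t1) (line b j t2).
Proof.
move=> neq_kj neq_abk neq_z1 neq_12 neq_z2; rewrite !inE => /orP[] /eqP a_t.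
  by subst t1; apply: (of_type_phi1_line neq_kj neq_abk); rewrite // eq_sym.
by subst t2; apply/of_type_swap/(of_type_phi1_line neq_kj neq_abk); rewrite // eq_sym.
Qed.

Lemma covered_edge_hamilton d (a z x y : vtx d) :
  covered a z x y -> is_edge z x y ->
  exists p, loose_path a y p /\ forall v : vtx d, v \in p.
Proof.
case=> p [path_p mem_p] e_zxy.
have x_p : x \notin p by rewrite mem_p !inE eqxx.
have y_p : y \notin p by rewrite mem_p !inE eqxx orbT.
have neq_xy : x != y by case/and4P: e_zxy.
exists (p ++ [:: x; y]); split; first exact: (loose_path_cat_edge path_p e_zxy).
by move=> v; rewrite mem_cat mem_p !inE; case: (v == x); case: (v == y).
Qed.

Theorem proposition1p6 (d : nat) (hd : 4 <= d) :
  (forall a b x y : vtx d, pairwise_distinct4 a b x y ->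
     (of_type (@phi1 d) a b x y \/ of_type (@phi2 d) a b x y \/
      of_type (@phi3 d) a b x y \/ of_type (@phi4 d) a b x y) ->
     covered a b x y) ->
  loose_hamilton_connected d.
Proof.
move=> cover_all a b neq_ab.
have [k neq_abk] := ffun_neq_exists neq_ab.
have [j neq_kj] := ord_neq_exists k (leq_trans (isT : 1 < 4) hd).
have [tz neq_za neq_zb] := I3_avoid2 (a j) (b j).
have [tw neq_wb neq_wz] := I3_avoid2 (b j) tz.
have neq_a_line t : a != line b j t by apply: contraNneq neq_abk => ->; rewrite line_ne.
have config : of_type (@phi1 d) a (line b j tz) (line b j tw) b.
  rewrite -[X in of_type _ _ _ _ X](line_self b j).
  apply: (of_type_phi1_line_mem neq_kj neq_abk) => //; first by rewrite eq_sym.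
  have : a j \in [:: tz; tw; b j] by apply: I3_mem3; rewrite // eq_sym.
  by rewrite inE eq_sym (negbTE neq_za).
apply: covered_edge_hamilton (cover_all _ _ _ _ _ (or_introl config)) _.
  rewrite /pairwise_distinct4 !neq_a_line neq_ab !line_eq_self neq_zb neq_wb.
  by rewrite (inj_eq (@line_inj _ b j)) eq_sym neq_wz.
rewrite -[X in is_edge _ _ X](line_self b j).
by apply: is_edge_line; rewrite // eq_sym.
Qed.
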